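(* Let $q$ be a prime power, $e\ge 2$, $r$ a positive integer, let $\xi$ be a primitive element of $\mathbb{F}_{q^e}^*$, and for integers $m$ let $f_m(x)=x^r(x^{q-1}+\xi^m)\in\mathbb{F}_{q^e}[x]$. If $f_j(x)$ does not permute $\mathbb{F}_{q^e}$ for every $0\le j<q-1$, then $f_m(x)$ does not permute $\mathbb{F}_{q^e}$ for every $0\le m<q^e-1$. *)

From mathcomp Require Import all_boot all_order all_algebra all_field.
Set Implicit Arguments. Unset Strict Implicit. Unset Printing Implicit Defensive.
Import GRing.Theory.
Local Open Scope ring_scope.

Definition prime_power (q : nat) : Prop :=
  exists p k : nat, [/\ prime p, (0 < k)%N & q = (p ^ k)%N].

Definition fm (F : finFieldType) (q r : nat) (xi : F) (m : nat) : F -> F :=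
  fun x => x ^+ r * (x ^+ (q - 1) + xi ^+ m).

Definition permutes (F : finFieldType) (f : F -> F) : Prop := bijective f.

From mathcomp Require Import all_boot all_order all_algebra all_field.
From mathcomp Require Import ring.

Set Implicit Arguments.
Unset Strict Implicit.
Unset Printing Implicit Defensive.

Local Open Scope ring_scope.
Import GRing.Theory.

(* Write m = t (q - 1) + j with j < q - 1 and put c = xi^t.  Then
   f_m (c x) = c^(r + q - 1) f_j x, so f_m is f_j with argument and value
   rescaled by nonzero constants, and f_m permutes F exactly when f_j does. *)

Lemma prime_power_gt1 (q : nat) : prime_power q -> (1 < q)%N.
Proof.
case=> p [k [p_pr k_gt0 ->]].
by rewrite -{1}(expn0 p) ltn_exp2l ?prime_gt1.
Qed.

Lemma permutes_scale (F : finFieldType) (f g : F -> F) (a c : F) :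
  (forall y, f (c * y) = a * g y) -> c != 0 -> permutes f -> permutes g.
Proof.
move=> fcE c_neq0 f_bij; apply: injF_bij => y1 y2 gE.
have: f (c * y1) = f (c * y2) by rewrite !fcE gE.
by move/(bij_inj f_bij)/(mulfI c_neq0).
Qed.

Lemma fm_scale (F : finFieldType) (q r : nat) (xi : F) (t j : nat) (y : F) :
  fm q r xi (t * (q - 1) + j) (xi ^+ t * y)
  = (xi ^+ t) ^+ (r + (q - 1)) * fm q r xi j y.
Proof.
rewrite /fm; set c := xi ^+ t; set d := (q - 1)%N.
by rewrite exprD exprM -/c !exprMn exprD; ring.
Qed.

Lemma permutes_fm_mod (F : finFieldType) (q r : nat) (xi : F) (m : nat) :
  xi != 0 -> permutes (fm q r xi m) -> permutes (fm q r xi (m %% (q - 1))).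
Proof.
move=> xi_neq0; rewrite {1}(divn_eq m (q - 1)).
exact: (permutes_scale (fm_scale _ _ _ _ _) (expf_neq0 _ xi_neq0)).
Qed.

Theorem proposition5p5 (F : finFieldType) (q e r : nat) (xi : F) :
  prime_power q -> (2 <= e)%N -> (0 < r)%N ->
  #|F| = (q ^ e)%N ->
  (q ^ e - 1)%N.-primitive_root xi ->
  (forall j : nat, (j < q - 1)%N -> ~ permutes (fm q r xi j)) ->
  forall m : nat, (m < q ^ e - 1)%N -> ~ permutes (fm q r xi m).
Proof.
move=> q_pp _ _ _ xi_prim not_perm_small m _ fm_perm.
have xi_neq0 : xi != 0 by rewrite (prim_root_eq0 xi_prim) -lt0n (prim_order_gt0 xi_prim).
apply: (not_perm_small (m %% (q - 1))%N).
  by rewrite ltn_mod subn_gt0 prime_power_gt1.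
exact: permutes_fm_mod.
Qed.
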